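(* Let $G$ be a directed graph without self-loops on vertex set $V=\{0,1,\dots,n-1\}$, $n\ge2$, with integer edge weights in $[-M,M]$, $M\ge1$. Let $H=100M$ and $L=\lceil\log_2 n\rceil$. Let $G'$ be the directed graph with vertices $u_A,u_B,u_C,u_D$ for each $u\in V$, a vertex $x$, and vertices $z_1,\dots,z_L,o_1,\dots,o_L$, and edges: for every edge $(u,v)$ of $G$, edges $(u_A,v_B),(u_B,v_C),(u_C,v_D)$ of weight $2H+w(u,v)$; for every $u\in V$, edges $(u_A,x)$ and $(x,u_D)$ of weight $3H$; for every $u\in V$ and $i\in\{1,\dots,L\}$, if the $i$-th bit of the binary representation of $u$ is $0$ then edges $(u_A,z_i)$ of weight $2H$ and $(o_i,u_D)$ of weight $3H$, and otherwise edges $(u_A,o_i)$ of weight $2H$ and $(z_i,u_D)$ of weight $3H$. Then the number of ordered pairs $(s,t)$ of distinct vertices of $G'$ other than $x$ such that some shortest $s$-to-$t$ path in $G'$ passes through $x$ equals $n$ minus the number of vertices of $G$ that lie on a negative-weight triangle.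
   Context: A negative-weight triangle in a directed graph is a triple of distinct vertices $u,v,t$ with edges $(u,v),(v,t),(t,u)$ whose weights sum to a negative number. *)

From HB Require Import structures.
From mathcomp Require Import all_boot all_order all_algebra.
Set Implicit Arguments. Unset Strict Implicit. Unset Printing Implicit Defensive.
Import Order.TTheory GRing.Theory Num.Theory.
Local Open Scope ring_scope.

(* Vertices of G' (n = #V(G), L = number of bit gadgets):
   inl (u, k)          = u_A, u_B, u_C, u_D for k = 0, 1, 2, 3
   inr (inl tt)        = x
   inr (inr (i, false)) = z_{i+1},  inr (inr (i, true)) = o_{i+1}  (i : 'I_L) *)
Definition GV (n L : nat) : finType := ('I_n * 'I_4 + (unit + 'I_L * bool))%type.

Definition vx (n L : nat) : GV n L := inr (inl tt).

(* the (i+1)-th bit (least significant first) of u, as a boolean *)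
Definition bitn (u i : nat) : bool := odd (u %/ 2 ^ i).

Definition gw (n L : nat) (E : rel 'I_n) (w : 'I_n -> 'I_n -> int) (H : int)
  (a b : GV n L) : option int :=
  match a, b with
  | inl (u, i), inl (v, j) =>
      if E u v && [|| (val i == 0%N) && (val j == 1%N),
                      (val i == 1%N) && (val j == 2%N)
                    | (val i == 2%N) && (val j == 3%N)]
      then Some (2 * H + w u v) else None
  | inl (u, i), inr (inl _) => if val i == 0%N then Some (3 * H) else None
  | inr (inl _), inl (v, j) => if val j == 3%N then Some (3 * H) else None
  | inl (u, i), inr (inr (k, b)) =>
      if (val i == 0%N) && (bitn u k == b) then Some (2 * H) else None
  | inr (inr (k, b)), inl (v, j) =>
      (* bit 0 -> edge from o_k (b = true); bit 1 -> edge from z_k (b = false) *)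
      if (val j == 3%N) && (bitn v k != b) then Some (3 * H) else None
  | _, _ => None
  end.

Fixpoint walk_weight (V : Type) (g : V -> V -> option int) (s : V) (p : seq V)
  : option int :=
  match p with
  | [::] => Some 0
  | t :: p' =>
      match g s t, walk_weight g t p' with
      | Some a, Some b => Some (a + b)
      | _, _ => None
      end
  end.

Definition shortest_through (V : eqType) (g : V -> V -> option int) (s t y : V) :=
  exists p c, [/\ walk_weight g s p = Some c, last s p = t, y \in s :: p &
     forall q c', walk_weight g s q = Some c' -> last s q = t -> c <= c'].

Definition on_neg_triangle (n : nat) (E : rel 'I_n) (w : 'I_n -> 'I_n -> int)
  (u : 'I_n) : bool :=
  [exists v, exists t, [&& u != v, v != t, t != u, E u v, E v t, E t u &
                          w u v + w v t + w t u < 0]].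

From HB Require Import structures.
From mathcomp Require Import all_boot all_order all_algebra.
From mathcomp Require Import zify ring lra.
Import Order.TTheory GRing.Theory Num.Theory.
Local Open Scope ring_scope.
Set Implicit Arguments. Unset Strict Implicit.

(* Edges of G' strictly increase the level u_A < x, z_i, o_i < u_B < u_C < u_D,
   so a walk through x between two vertices other than x is u_A -> x -> v_D, of
   weight 6H. If u <> v, some bit i separates u and v and u_A -> z_i/o_i -> v_D
   weighs 5H, so x is on a shortest walk only when v = u. The u_A-to-u_D walks
   avoiding x are u_A -> a_B -> b_C -> u_D, of weight 6H plus the weight of the
   closed walk u a b u, which is a triangle since G has no self-loops; the bit
   gadget cannot return to u_D. Hence x lies on a shortest u_A-to-u_D walk iff u
   is on no negative triangle, and these pairs (u_A, u_D) are all the pairs. *)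

Lemma eq_bitn k a b : (a < 2 ^ k)%N -> (b < 2 ^ k)%N ->
  (forall i, (i < k)%N -> bitn a i = bitn b i) -> a = b.
Proof.
elim: k a b => [|k IHk] a b.
  by rewrite expn0 !ltnS !leqn0 => /eqP -> /eqP ->.
move=> ltak ltbk eq_bits.
have eq_half : a./2 = b./2.
  apply: IHk => [||i lt_ik].
  - by rewrite -divn2 ltn_divLR // -expnSr.
  - by rewrite -divn2 ltn_divLR // -expnSr.
  by have := eq_bits i.+1 lt_ik; rewrite /bitn expnS !divnMA !divn2.
have eq_odd : odd a = odd b by have := eq_bits 0%N isT; rewrite /bitn !divn1.
by rewrite -(odd_double_half a) -(odd_double_half b) eq_odd eq_half.
Qed.

Lemma exists_bitn_neq n L (u v : 'I_n) : (n <= 2 ^ L)%N -> u != v ->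
  exists i : 'I_L, bitn u i != bitn v i.
Proof.
move=> le_n2L neq_uv; apply/existsP; apply: contraR neq_uv.
rewrite negb_exists => /forallP eq_bits; apply/eqP/val_inj.
apply: (@eq_bitn L) => [||i lt_iL].
- exact: leq_trans (ltn_ord u) le_n2L.
- exact: leq_trans (ltn_ord v) le_n2L.
by have /negbNE/eqP := eq_bits (Ordinal lt_iL).
Qed.

Section Reduction.

Variables (n L : nat) (E : rel 'I_n) (w : 'I_n -> 'I_n -> int) (H : int).

Local Notation g := (gw (L:=L) E w H).
Local Notation x := (vx n L).
Local Notation vA u := (inl (u, ord0) : GV n L).
Local Notation vB u := (inl (u, @Ordinal 4 1 isT) : GV n L).
Local Notation vC u := (inl (u, @Ordinal 4 2 isT) : GV n L).
Local Notation vD u := (inl (u, ord_max) : GV n L).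
Local Notation gadget k b := (inr (inr (k, b)) : GV n L).

Definition level (a : GV n L) : nat :=
  match a with inl (_, k) => (2 * k)%N | inr _ => 1%N end.

Lemma level_le6 a : (level a <= 6)%N.
Proof. by case: a => [[u k]|] //=; have := ltn_ord k; lia. Qed.

Lemma level_gw a b c : g a b = Some c -> (level a < level b)%N.
Proof.
case: a => [[u i]|[[]|[k b0]]]; case: b => [[v j]|[[]|[k' b1]]] //=.
- by case: ifP => // /andP[_ /or3P[] /andP[/eqP -> /eqP ->]].
- by case: ifP => // /eqP ->.
- by case: ifP => // /andP[/eqP -> _].
- by case: ifP => // /eqP ->.
- by case: ifP => // /andP[/eqP -> _].
Qed.

Lemma walk_weight_cons s t p c : walk_weight g s (t :: p) = Some c ->
  exists a b, [/\ g s t = Some a, walk_weight g t p = Some b & c = a + b].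
Proof.
rewrite /=; case: (g s t) => [a|]; case: (walk_weight g t p) => [b|] //.
by case=> <-; exists a, b.
Qed.

Lemma level_walk s p c y : walk_weight g s p = Some c -> y \in p ->
  (level s < level y)%N.
Proof.
elim: p s c => [//|a p IHp] s c /walk_weight_cons[ca [cp [gsa wp _]]].
rewrite inE => /orP[/eqP -> | y_p]; first exact: level_gw gsa.
exact: ltn_trans (level_gw gsa) (IHp _ _ wp y_p).
Qed.

Lemma walk_from_D v (j : 'I_4) q c : val j = 3%N ->
  walk_weight g (inl (v, j)) q = Some c -> q = [::] /\ c = 0.
Proof.
move=> j3; case: q => [[<-] //|a q /walk_weight_cons[ca [_ [gva _ _]]]].
by have := level_gw gva; have := level_le6 a; rewrite /= j3; lia.
Qed.

Lemma gw_layer u (i : 'I_4) v (j : 'I_4) c :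
  g (inl (u, i)) (inl (v, j)) = Some c ->
  [/\ E u v, val j = (val i).+1 & c = 2 * H + w u v].
Proof.
by rewrite /=; case: ifP => // /andP[Euv /or3P[] /andP[/eqP -> /eqP ->]] [<-].
Qed.

Lemma gw_from_layer u (i : 'I_4) b c :
  (0 < val i)%N -> g (inl (u, i)) b = Some c ->
  exists v (j : 'I_4), [/\ b = inl (v, j), E u v, val j = (val i).+1
                        & c = 2 * H + w u v].
Proof.
case: b => [[v j] _ /gw_layer[]|[[]|[k b]]] /=; first by exists v, j.
- by case: eqP => // ->.
- by case: eqP => // ->.
Qed.

Lemma gw_into_x a c : g a x = Some c -> exists u, a = vA u /\ c = 3 * H.
Proof.
case: a => [[u i]|[[]|[k b]]] //=; case: eqP => // i0 [<-].
by exists u; split => //; congr (inl (_, _)); apply: val_inj.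
Qed.

Lemma gw_into_gadget u (i : 'I_4) k b c : g (inl (u, i)) (gadget k b) = Some c ->
  [/\ val i = 0%N, bitn u k = b & c = 2 * H].
Proof. by rewrite /=; case: ifP => // /andP[/eqP -> /eqP ->] [<-]. Qed.

Lemma walk_from_x q c : walk_weight g x q = Some c -> q != [::] ->
  exists v, q = [:: vD v] /\ c = 3 * H.
Proof.
case: q => [//|a q /walk_weight_cons[ca [cq [gxa wq ->]]] _].
case: a gxa wq => [[v j]|[[]|[k b]]] //=; case: eqP => // j3 [<-] wq.
have [-> ->] := walk_from_D j3 wq; exists v; split; last lra.
by congr [:: inl (_, _)]; apply: val_inj.
Qed.

Lemma walk_from_gadget k b q c : walk_weight g (gadget k b) q = Some c ->
  q != [::] -> exists v, [/\ q = [:: vD v], bitn v k != b & c = 3 * H].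
Proof.
case: q => [//|a q /walk_weight_cons[ca [cq [gka wq ->]]] _].
case: a gka wq => [[v j]|[[]|[k' b']]] //=.
case: ifP => // /andP[/eqP j3 bit_vk] [<-] wq.
have [-> ->] := walk_from_D j3 wq; exists v; split => //; last lra.
by congr [:: inl (_, _)]; apply: val_inj.
Qed.

Lemma walk_from_C a (i : 'I_4) v q c : val i = 2%N ->
  walk_weight g (inl (a, i)) q = Some c -> last (inl (a, i)) q = vD v ->
  E a v /\ c = 2 * H + w a v.
Proof.
move=> i2; case: q => [_ /= [_ /(congr1 val)] | b q]; first by rewrite /= i2.
move=> /walk_weight_cons[cb [cq [gab wq ->]]]; move: wq.
have := gw_from_layer _ gab; rewrite i2 => /(_ isT)[v' [j [-> Eav' j3 ->]]] wq.
have [-> ->] := walk_from_D j3 wq.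
by case=> <- _; split; last lra.
Qed.

Lemma walk_from_B a (i : 'I_4) v q c : val i = 1%N ->
  walk_weight g (inl (a, i)) q = Some c -> last (inl (a, i)) q = vD v ->
  exists b, [/\ E a b, E b v & c = 2 * H + w a b + (2 * H + w b v)].
Proof.
move=> i1; case: q => [_ /= [_ /(congr1 val)] | b q]; first by rewrite /= i1.
move=> /walk_weight_cons[cb [cq [gab wq ->]]]; move: wq.
have := gw_from_layer _ gab; rewrite i1 => /(_ isT)[b' [j [-> Eab' j2 ->]]] wq.
move=> /(walk_from_C j2 wq)[Eb'v ->].
by exists b'; split; last lra.
Qed.

Lemma walk_A_to_D u q c :
  walk_weight g (vA u) q = Some c -> last (vA u) q = vD u ->
  c = 6 * H \/ exists a b, [/\ E u a, E a b, E b u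
                             & c = 6 * H + (w u a + w a b + w b u)].
Proof.
case: q => [_ /= [] //|a q /walk_weight_cons[ca [cq [gua wq ->]]] /= last_q].
case: a gua wq last_q => [[a k]|[[]|[k b]]] gua wq last_q.
- have [Eua k1 ->] := gw_layer gua.
  have [b [Eab Ebu ->]] := walk_from_B k1 wq last_q.
  by right; exists a, b; split => //; lra.
- have [|v [q_v ->]] := walk_from_x wq; first by apply: contraPneq last_q => ->.
  by left; move: gua => /= [<-]; lra.
- have [_ bit_uk _] := gw_into_gadget gua.
  have [|v [q_v bit_vk _]] := walk_from_gadget wq.
    by apply: contraPneq last_q => ->.
  by move: last_q; rewrite q_v /= => -[v_u]; rewrite v_u bit_uk eqxx in bit_vk.
Qed.

Lemma walk_through_x s p c : walk_weight g s p = Some c ->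
  x \in s :: p -> s != x -> last s p != x ->
  exists u v, [/\ s = vA u, p = [:: x; vD v] & c = 6 * H].
Proof.
rewrite inE => wp /orP[/eqP x_s | x_p] s_x; first by rewrite x_s eqxx in s_x.
case: p wp x_p => [//|a p /walk_weight_cons[ca [cp [gsa wp ->]]]].
rewrite inE => /orP[/eqP a_x | x_p] /= last_p; last first.
  by have := level_walk wp x_p; have := level_gw gsa; rewrite /=; lia.
subst a; have [u [-> ->]] := gw_into_x gsa.
have [|v [-> ->]] := walk_from_x wp; first by apply: contraNneq last_p => ->.
by exists u, v; split => //; lra.
Qed.

Lemma walk_through_gadget (u v : 'I_n) (k : 'I_L) : bitn v k != bitn u k ->
  walk_weight g (vA u) [:: gadget k (bitn u k); vD v] = Some (5 * H).
Proof. by move=> bit_vk /=; rewrite eqxx bit_vk; congr Some; lra. Qed.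

Lemma walk_through_layers (u a b v : 'I_n) : E u a -> E a b -> E b v ->
  walk_weight g (vA u) [:: vB a; vC b; vD v] =
  Some (6 * H + (w u a + w a b + w b v)).
Proof. by move=> /= -> -> ->; congr Some; lra. Qed.

Lemma shortest_through_x_AD u : irreflexive E -> ~~ on_neg_triangle E w u ->
  shortest_through g (vA u) (vD u) x.
Proof.
move=> irrE no_neg; exists [:: x; vD u], (6 * H).
split => //; first by congr Some; lra.
move=> q c' /walk_A_to_D/[apply] -[-> //|[a [b [Eua Eab Ebu ->]]]].
suff : 0 <= w u a + w a b + w b u by lra.
rewrite leNgt; apply: contra no_neg => neg.
apply/existsP; exists a; apply/existsP; exists b.
by rewrite Eua Eab Ebu neg !andbT; apply/and3P; split;
  [apply: contraTneq Eua | apply: contraTneq Eab | apply: contraTneq Ebu];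
  move=> ->; rewrite irrE.
Qed.

Lemma shortest_through_x_endpoints s t : 0 < H -> (n <= 2 ^ L)%N ->
  s != x -> t != x -> shortest_through g s t x ->
  exists2 u, s = vA u /\ t = vD u & ~~ on_neg_triangle E w u.
Proof.
move=> H_gt0 le_n2L s_x t_x [p [c [wp last_p x_p minp]]].
have [|u [v [s_u p_v c6]]] := walk_through_x wp x_p s_x; first by rewrite last_p.
subst s p c; rewrite /= in last_p; subst t.
have eq_uv : u = v.
  apply/eqP; apply: contraT => neq_uv.
  have [k bit_uk] := exists_bitn_neq le_n2L neq_uv.
  have bit_vk : bitn v k != bitn u k by rewrite eq_sym.
  by have := minp _ _ (walk_through_gadget bit_vk) erefl; lra.
subst v; exists u => //; apply/negP.
move=> /existsP[a /existsP[b /and5P[_ _ _ Eua /and3P[Eab Ebu neg]]]].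
by have := minp _ _ (walk_through_layers Eua Eab Ebu) erefl; lra.
Qed.

End Reduction.

Unset Implicit Arguments.

Theorem mainTheorem10 (n : nat) (E : rel 'I_n) (w : 'I_n -> 'I_n -> int) (M : int)
  (Hn : (2 <= n)%N) (HM : 1 <= M) (Hloop : irreflexive E)
  (Hw : forall u v, E u v -> - M <= w u v <= M) :
  exists S : {set GV n (up_log 2 n) * GV n (up_log 2 n)},
    (forall s t, (s, t) \in S <->
       [/\ s != t, s != vx n (up_log 2 n), t != vx n (up_log 2 n) &
           shortest_through (gw E w (100 * M)) s t (vx n (up_log 2 n))]) /\
    #|S| = (n - #|[set u | on_neg_triangle E w u]|)%N.
Proof.
have H_gt0 : 0 < 100 * M by lra.
pose AD u : GV n (up_log 2 n) * GV n (up_log 2 n) :=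
  (inl (u, ord0), inl (u, ord_max)).
exists (AD @: ~: [set u | on_neg_triangle E w u]); split=> [s t|].
- split=> [/imsetP[u /[!inE] no_neg [-> ->]] | [_ s_x t_x through_x]].
    by split=> //; [apply/eqP => -[] | exact: shortest_through_x_AD].
  have [u [-> ->] no_neg] :=
    shortest_through_x_endpoints H_gt0 (@up_logP 2 n isT) s_x t_x through_x.
  by apply/imsetP; exists u; rewrite ?inE.
- by rewrite card_imset => [|u v []]; rewrite // cardsCs setCK card_ord.
Qed.
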